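(* Let $G$ and $H$ be finite groups such that $|G|$ and $|H|$ have the same prime divisors, and let $\alpha\colon G\to\operatorname{Aut}(H)$ be an action by automorphisms. Then every connected component of $\mathcal{C}(\alpha)$ has diameter at most $4$ (i.e. any two vertices in the same connected component are joined by a path of length at most $4$).
   Context: For an action $\alpha$ of a finite group $G$ on a finite group $H$ by automorphisms, $\mathcal{C}(\alpha)$ is the simple undirected graph whose vertices are the non-trivial orbits of the action (orbits of size $>1$), two distinct vertices $L_1,L_2$ being adjacent if and only if $\gcd(|L_1|,|L_2|)\neq 1$. *)

From mathcomp Require Import all_boot all_order all_fingroup.
Set Implicit Arguments. Unset Strict Implicit. Unset Printing Implicit Defensive.


Section OrbitGraph.
Variables (aT rT : finGroupType) (G : {group aT}) (H : {group rT}).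
Variable to : groupAction G H.

Definition orbit_vertices : {set {set rT}} :=
  [set L in orbit to G @: H | 1 < #|L|].

Definition orbit_adj : rel {set rT} :=
  fun L1 L2 => (L1 != L2) && (gcdn #|L1| #|L2| != 1).

(* p is a walk in C(alpha) from L1 to L2 (its length is size p). *)
Definition orbit_walk (L1 L2 : {set rT}) (p : seq {set rT}) : Prop :=
  [/\ L1 \in orbit_vertices, all (mem orbit_vertices) p,
      path orbit_adj L1 p & last L1 p = L2].

End OrbitGraph.

From mathcomp Require Import all_boot all_order all_fingroup.
Set Implicit Arguments. Unset Strict Implicit. Unset Printing Implicit Defensive.

(* Every connected component of the orbit graph C(alpha) has diameter <= 4.
   This holds for any action by automorphisms.

   For A, B in a finite group, the difference group
      <A^-1 A> has order >= |A|.  If A * B lies in a single coset A y (resp.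
      x B) then <B^-1 B> embeds in a conjugate of the right stabiliser of A,
      so its order divides |A| and |<A^-1 A>|; we write this "B ~> A".
   2. Orbits.  If the orbits of x and y have coprime sizes, the stabilisers of
      x and y have product G, hence O(x) * O(y) lies in O(xy) and |O(xy)|
      divides |O(x)| |O(y)|.  So O(xy) is either a common neighbour of O(x)
      and O(y) in C(alpha), or equals O(x) y (giving O(y) ~> O(x)) or x O(y)
      (giving O(x) ~> O(y)).
   3. Graph.  "~>" arrows cannot form a fork A ~> B, A ~> C or a chain
      A ~> B ~> C with |B|, |C| coprime.  A case analysis then shortens every
      walk of length 5 to one of length <= 4, and induction on the length
      shortens every walk. *)

Open Scope group_scope.

Section GroupFacts.
Variable gT : finGroupType.
Implicit Types (A B C S : {set gT}) (x y t : gT).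

Definition diff_group A : {group gT} := <<[set (u^-1 * v)%g | u in A, v in A]>>%G.

Definition diff_dvd A B : bool :=
  (#|diff_group A| %| #|B|) && (#|diff_group A| %| #|diff_group B|).

(* x^-1 A is contained in the difference group of A. *)
Lemma card_diff_group A x : x \in A -> #|A| <= #|diff_group A|.
Proof.
move=> Ax; rewrite -(card_lcoset A x^-1); apply: subset_leq_card.
apply/subsetP=> u; rewrite mem_lcoset invgK => Axu.
by apply: mem_gen; rewrite -[u](mulKg x); apply: imset2_f.
Qed.

Lemma diff_groupV_sub A x : x \in A -> diff_group A^-1 \subset diff_group A :^ x^-1.
Proof.
move=> Ax; rewrite gen_subG; apply/subsetP=> _ /imset2P[u v Au Av ->].
move: Au Av; rewrite !mem_invg mem_conjgV => Au Av.
have -> : (u^-1 * v) ^ x = (x^-1 * u^-1) * (x^-1 * v^-1)^-1.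
  by rewrite conjgE invMg !invgK !mulgA.
by rewrite groupM ?groupV // mem_gen //; apply: imset2_f.
Qed.

Lemma card_diff_groupV A x : x \in A -> #|diff_group A^-1| = #|diff_group A|.
Proof.
move=> Ax; have Ax' : x^-1 \in A^-1 by rewrite mem_invg invgK.
have := subset_leq_card (diff_groupV_sub Ax); rewrite cardJg => le_AV_A.
have := subset_leq_card (diff_groupV_sub Ax'); rewrite !invgK cardJg => le_A_AV.
by apply/eqP; rewrite eqn_leq le_AV_A le_A_AV.
Qed.

(* The right stabiliser of S is a set of right translations preserving S;
   S is a union of its left cosets, so its order divides |S|. *)
Lemma card_rstab_dvd S : #|'N(S | 'R)| %| #|S|.
Proof.
set K := 'N(S | 'R)%G.
have actsK : [acts K, on S | 'R] by exact: subxx.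
rewrite -(acts_sum_card_orbit actsK) (eq_bigr (fun _ => #|K|)) ?sum_nat_const ?dvdn_mull //.
by move=> T /imsetP[x Sx ->]; rewrite card_orbit astab1R setIg1 indexg1.
Qed.

Lemma rstab_mem S t : (forall s, s \in S -> s * t \in S) -> t \in 'N(S | 'R).
Proof.
move=> St; have sSt_S : S :* t \subset S.
  by apply/subsetP=> u; rewrite mem_rcoset => /St; rewrite mulgKV.
have eqSt : S :* t = S by apply/eqP; rewrite eqEcard sSt_S card_rcoset leqnn.
by apply/astabsP=> u /=; rewrite -{1}eqSt mem_rcoset mulgK.
Qed.

(* If A * B lies in the single right coset A y, then B ~> A: every b y^-1
   (b in B) stabilises A on the right, so <B^-1 B> embeds in a conjugate of
   'N(A | 'R), which in turn lies in <A^-1 A> and has order dividing |A|. *)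
Lemma diff_dvd_rcoset A B x y :
  x \in A -> y \in B -> A * B \subset A :* y -> diff_dvd B A.
Proof.
move=> Ax By sAB_Ay; set K := 'N(A | 'R)%G.
have BK b : b \in B -> b * y^-1 \in K.
  move=> Bb; apply: rstab_mem => a Aa.
  have : a * b \in A :* y by apply: subsetP sAB_Ay _ (mem_mulg Aa Bb).
  by rewrite mem_rcoset mulgA.
have sDB_K : diff_group B \subset K :^ y.
  rewrite gen_subG; apply/subsetP=> _ /imset2P[u v Bu Bv ->].
  rewrite mem_conjg.
  have -> : (u^-1 * v) ^ y^-1 = (u * y^-1)^-1 * (v * y^-1).
    by rewrite conjgE invMg !invgK !mulgA.
  by rewrite groupM ?groupV ?BK.
have sK_DA : K \subset diff_group A.
  apply/subsetP=> t Kt; have Axt : x * t \in A by move/astabsP: Kt => /(_ x) ->.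
  by apply: mem_gen; rewrite -[t](mulKg x); apply: imset2_f.
apply/andP; split; apply: dvdn_trans (cardSg sDB_K) _; rewrite cardJg.
  exact: card_rstab_dvd.
exact: cardSg.
Qed.

(* The mirror image for left cosets, obtained by inverting all sets. *)
Lemma diff_dvd_lcoset A B x y :
  x \in A -> y \in B -> A * B \subset x *: B -> diff_dvd A B.
Proof.
move=> Ax By sAB_xB.
have : diff_dvd A^-1 B^-1.
  apply: (@diff_dvd_rcoset B^-1 A^-1 y^-1 x^-1); rewrite ?mem_invg ?invgK //.
  by rewrite -invg_set1 -!invMg invSg.
by rewrite /diff_dvd !card_invg !(card_diff_groupV Ax) !(card_diff_groupV By).
Qed.

Lemma diff_dvd_fork A B C :
  1 < #|diff_group A| -> diff_dvd A B -> diff_dvd A C -> ~~ coprime #|B| #|C|.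
Proof.
move=> DA_gt1 /andP[dvdB _] /andP[dvdC _]; apply: contraL DA_gt1 => coBC.
by rewrite -leqNgt dvdn_leq // -(eqnP coBC) dvdn_gcd dvdB dvdC.
Qed.

Lemma diff_dvd_chain A B C :
  1 < #|diff_group A| -> diff_dvd A B -> diff_dvd B C -> ~~ coprime #|B| #|C|.
Proof.
move=> DA_gt1 /andP[dvdB dvdDB] /andP[dvdC _]; apply: contraL DA_gt1 => coBC.
by rewrite -leqNgt dvdn_leq // -(eqnP coBC) dvdn_gcd dvdB (dvdn_trans dvdDB dvdC).
Qed.

Lemma indexI_coprime (G K L : {group gT}) :
  K \subset G -> L \subset G -> coprime #|G : K| #|G : L| ->
  #|G : K :&: L| = (#|G : K| * #|G : L|)%N.
Proof.
move=> sKG sLG coKL.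
rewrite -(Lagrange_index sKG (subsetIl K L)) indexgI -(indexMg L K).
by rewrite (coprime_index_mulG sLG sKG) // coprime_sym.
Qed.

End GroupFacts.

Section OrbitGraph.
Variables (aT rT : finGroupType) (G : {group aT}) (H : {group rT}).
Variable to : groupAction G H.

Notation O x := (orbit to G x).

Lemma stab_memP x g : reflect (g \in G /\ to x g = x) (g \in 'C_G[x | to]).
Proof. by rewrite !inE sub1set inE andbA andbb; apply: andPP idP eqP. Qed.

Lemma mul_stab_coprime x y :
  coprime #|O x| #|O y| -> 'C_G[x | to] * 'C_G[y | to] = G.
Proof.
by rewrite !card_orbit_in // => coxy; apply: coprime_index_mulG; rewrite ?subsetIl.
Qed.

(* Hence any pair (x', y') in O(x) x O(y) is the image of (x, y) under a single
   element of G, so x' * y' lies in O(x * y). *)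
Lemma orbit_mul_sub x y :
  x \in H -> y \in H -> coprime #|O x| #|O y| -> O x * O y \subset O (x * y).
Proof.
move=> Hx Hy coxy; apply/subsetP=> _ /mulsgP[_ _ /imsetP[g Gg ->] /imsetP[h Gh ->] ->].
have : g * h^-1 \in 'C_G[x | to] * 'C_G[y | to].
  by rewrite mul_stab_coprime ?groupM ?groupV.
case/mulsgP=> s t /stab_memP[Gs fix_s] /stab_memP[Gt fix_t] def_gh.
have def_k : s^-1 * g = t * h by rewrite -(mulgKV h g) def_gh -!mulgA mulKg.
have -> : to x g = to x (s^-1 * g) by rewrite actMin ?groupV // -{2}fix_s actKin.
have -> : to y h = to y (t * h) by rewrite actMin // fix_t.
by rewrite def_k -gactM ?groupM // mem_orbit ?groupM.
Qed.

(* |O(x y)| divides |O(x)| |O(y)|: the common stabiliser of x and y fixes x y,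
   and has index |O(x)| |O(y)| by the coprimality of the two indices. *)
Lemma card_orbit_mul_dvd x y :
  x \in H -> y \in H -> coprime #|O x| #|O y| ->
  #|O (x * y)| %| #|O x| * #|O y|.
Proof.
move=> Hx Hy coxy; rewrite !card_orbit_in // in coxy *.
rewrite -indexI_coprime ?subsetIl //; apply: indexgS.
apply/subsetP=> g /setIP[/stab_memP[Gg fix_x] /stab_memP[_ fix_y]].
by apply/stab_memP; rewrite gactM // fix_x fix_y.
Qed.

Notation V := (orbit_vertices to).

Lemma vertex_diff_group_gt1 A : A \in V -> 1 < #|diff_group A|.
Proof.
rewrite inE => /andP[/imsetP[x _ ->] A_gt1].
exact: leq_trans A_gt1 (card_diff_group (orbit_refl _ _ _)).
Qed.

(* Two vertices of coprime sizes either have a common neighbour, namely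
   O(x y), or one of them is ~> the other. *)
Lemma coprime_vertices_trichotomy A B :
  A \in V -> B \in V -> coprime #|A| #|B| ->
  (exists2 N, N \in V & orbit_adj A N && orbit_adj N B)
  \/ diff_dvd A B \/ diff_dvd B A.
Proof.
rewrite !inE => /andP[/imsetP[x Hx ->] A_gt1] /andP[/imsetP[y Hy ->] B_gt1] coAB.
set C := O (x * y).
have Ax := orbit_refl to G x; have By := orbit_refl to G y.
have sAB_C : O x * O y \subset C := orbit_mul_sub Hx Hy coAB.
have sAy_C : O x :* y \subset C by apply: subset_trans sAB_C; rewrite mulgS ?sub1set.
have sxB_C : x *: O y \subset C by apply: subset_trans sAB_C; rewrite mulSg ?sub1set.
have dvdC := card_orbit_mul_dvd Hx Hy coAB.
case: (boolP (coprime #|C| #|O y|)) => [coCB | ncoCB].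
  right; right; apply: (diff_dvd_rcoset Ax By).
  suff -> : O x :* y = C by [].
  apply/eqP; rewrite eqEcard sAy_C card_rcoset /= dvdn_leq //.
    exact: leq_trans A_gt1.
  by rewrite -(Gauss_dvdl _ coCB) dvdC.
case: (boolP (coprime #|C| #|O x|)) => [coCA | ncoCA].
  right; left; apply: (diff_dvd_lcoset Ax By).
  suff -> : x *: O y = C by [].
  apply/eqP; rewrite eqEcard sxB_C card_lcoset /= dvdn_leq //.
    exact: leq_trans B_gt1.
  by rewrite -(Gauss_dvdl _ coCA) mulnC dvdC.
left; exists C.
  rewrite inE imset_f ?groupM //=; apply: leq_trans A_gt1 _.
  by rewrite -(card_rcoset _ y) subset_leq_card.
apply/andP; split; apply/andP; split.
- by apply: contraNneq ncoCB => eqAC; rewrite -eqAC.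
- by rewrite gcdnC.
- by apply: contraNneq ncoCA => eqCB; rewrite eqCB coprime_sym.
- exact: ncoCB.
Qed.

Definition short_walk (k : nat) (L1 L2 : {set rT}) : Prop :=
  exists p, orbit_walk to L1 L2 p /\ size p <= k.

Lemma short_walk_le m n L1 L2 : m <= n -> short_walk m L1 L2 -> short_walk n L1 L2.
Proof.
by move=> le_mn [p [walk_p le_p]]; exists p; split => //; apply: leq_trans le_mn.
Qed.

Lemma short_walk_cat m n L1 L2 L3 :
  short_walk m L1 L2 -> short_walk n L2 L3 -> short_walk (m + n) L1 L3.
Proof.
move=> [p [[V1 Vp path_p last_p] le_p]] [q [[V2 Vq path_q last_q] le_q]].
exists (p ++ q); split; last by rewrite size_cat leq_add.
split=> //; first by rewrite all_cat Vp.
  by rewrite cat_path path_p last_p.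
by rewrite last_cat last_p.
Qed.

Lemma short_walk_edge L1 L2 :
  L1 \in V -> L2 \in V -> orbit_adj L1 L2 -> short_walk 1 L1 L2.
Proof. by move=> V1 V2 adj12; exists [:: L2]; do !split; rewrite /= ?V2 ?adj12. Qed.

Lemma short_walk_near L1 L2 :
  L1 \in V -> L2 \in V -> ~~ coprime #|L1| #|L2| -> short_walk 1 L1 L2.
Proof.
move=> V1 V2 nco12; have [<- | ne12] := eqVneq L1 L2; first by exists [::].
by apply: short_walk_edge; rewrite /orbit_adj ?ne12.
Qed.

Lemma short_walk_common L1 L2 :
  L1 \in V -> L2 \in V ->
  (exists2 N, N \in V & orbit_adj L1 N && orbit_adj N L2) -> short_walk 2 L1 L2.
Proof.
move=> V1 V2 [N VN /andP[adj1N adjN2]].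
exact: short_walk_cat (short_walk_edge V1 VN adj1N) (short_walk_edge VN V2 adjN2).
Qed.

(* If one of the pairs (v0,v5), (v0,v3), (v2,v5), (v3,v5), (v0,v2) has
   non-coprime sizes, this gives a shortcut.  Otherwise the trichotomy for
   (v0,v5) gives a common neighbour or an arrow; an arrow v0 ~> v5 (resp.
   v5 ~> v0) forces a common neighbour of v0, v3 (resp. v2, v5), since the
   other arrows between them would create a forbidden fork or chain. *)
Lemma walk5_shortcut v0 v1 v2 v3 v4 v5 :
  v0 \in V -> v1 \in V -> v2 \in V -> v3 \in V -> v4 \in V -> v5 \in V ->
  orbit_adj v0 v1 -> orbit_adj v1 v2 -> orbit_adj v2 v3 -> orbit_adj v3 v4 ->
  orbit_adj v4 v5 -> short_walk 4 v0 v5.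
Proof.
move=> V0 V1 V2 V3 V4 V5 a01 a12 a23 a34 a45.
have w01 := short_walk_edge V0 V1 a01; have w12 := short_walk_edge V1 V2 a12.
have w23 := short_walk_edge V2 V3 a23; have w34 := short_walk_edge V3 V4 a34.
have w45 := short_walk_edge V4 V5 a45.
have w02 : short_walk 2 v0 v2 := short_walk_cat w01 w12.
have w35 : short_walk 2 v3 v5 := short_walk_cat w34 w45.
have w03 : short_walk 3 v0 v3 := short_walk_cat w02 w23.
have w25 : short_walk 3 v2 v5 := short_walk_cat w23 w35.
have [c05 | /(short_walk_near V0 V5)] := boolP (coprime #|v0| #|v5|);
  last exact: short_walk_le.
have [c03 | /(short_walk_near V0 V3) w03'] := boolP (coprime #|v0| #|v3|);
  last exact: short_walk_le (short_walk_cat w03' w35).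
have [c25 | /(short_walk_near V2 V5) w25'] := boolP (coprime #|v2| #|v5|);
  last exact: short_walk_le (short_walk_cat w02 w25').
have [c35 | /(short_walk_near V3 V5) w35'] := boolP (coprime #|v3| #|v5|);
  last exact: short_walk_le (short_walk_cat w03 w35').
have [c02 | /(short_walk_near V0 V2) w02'] := boolP (coprime #|v0| #|v2|);
  last exact: short_walk_le (short_walk_cat w02' w25).
have d0 := vertex_diff_group_gt1 V0; have d2 := vertex_diff_group_gt1 V2.
have d3 := vertex_diff_group_gt1 V3; have d5 := vertex_diff_group_gt1 V5.
have [/(short_walk_common V0 V5) | [ar05 | ar50]] :=
  coprime_vertices_trichotomy V0 V5 c05.
- exact: short_walk_le.
- have [/(short_walk_common V0 V3) w03' | [ar03 | ar30]] :=
    coprime_vertices_trichotomy V0 V3 c03.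
  + exact: short_walk_cat w03' w35.
  + by move: (diff_dvd_fork d0 ar03 ar05); rewrite c35.
  + by move: (diff_dvd_chain d3 ar30 ar05); rewrite c05.
- have [/(short_walk_common V2 V5) w25' | [ar25 | ar52]] :=
    coprime_vertices_trichotomy V2 V5 c25.
  + exact: short_walk_cat w02 w25'.
  + by move: (diff_dvd_chain d2 ar25 ar50); rewrite coprime_sym c05.
  + by move: (diff_dvd_fork d5 ar50 ar52); rewrite c02.
Qed.

(* Replacing the first five steps of a walk by at most four, repeatedly,
   yields a walk of length <= 4 between the same endpoints. *)
Lemma walk_shortcut n L1 L2 p :
  size p <= n -> orbit_walk to L1 L2 p -> short_walk 4 L1 L2.
Proof.
elim: n L1 p => [|n IHn] L1 p le_p walk_p.
  by exists p; split; last exact: leq_trans le_p _.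
have [le_p4 | ] := leqP (size p) 4; first by exists p.
case: p le_p walk_p => [|v1 [|v2 [|v3 [|v4 [|v5 rest]]]]] // le_p walk_p _.
case: walk_p => V0 /= /and5P[V1 V2 V3 V4 /andP[V5 Vrest]].
move=> /and5P[a01 a12 a23 a34 /andP[a45 path_rest]] last_rest.
have [q [[_ Vq path_q last_q] le_q]] :=
  walk5_shortcut V0 V1 V2 V3 V4 V5 a01 a12 a23 a34 a45.
apply: (IHn L1 (q ++ rest)).
  rewrite size_cat; move: le_p; rewrite /= !ltnS => le_rest.
  exact: leq_trans (leq_add le_q (leqnn _)) le_rest.
split=> //; first by rewrite all_cat Vq.
  by rewrite cat_path path_q last_q.
by rewrite last_cat last_q.
Qed.

End OrbitGraph.

Close Scope group_scope.

Theorem mainTheorem3 (aT rT : finGroupType) (G : {group aT}) (H : {group rT})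
    (to : groupAction G H) :
  primes #|G| = primes #|H| ->
  forall L1 L2 : {set rT},
    (exists p, orbit_walk to L1 L2 p) ->
    exists p, orbit_walk to L1 L2 p /\ size p <= 4.
Proof.
move=> _ L1 L2 [p walk_p].
exact: (walk_shortcut (leqnn (size p)) walk_p).
Qed.
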